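(* Let $G=Z_{2^{\lambda_1}}\times\cdots\times Z_{2^{\lambda_n}}$ with $\lambda_1\le\cdots\le\lambda_n$. The lattice of characteristic subgroups of $G$ is distributive if and only if every characteristic subgroup of $G$ is regular.
   Context: Tuples are ordered componentwise; for $\mathbf a$ with $\mathbf 0\le\mathbf a\le(\lambda_1,\dots,\lambda_n)$, $T(\mathbf a)$ is the set of $(g_1,\dots,g_n)\in G$ with $|g_i|=2^{a_i}$ for all $i$, and $R(\mathbf a)=\bigcup_{\mathbf b\le\mathbf a}T(\mathbf b)$. A subgroup is regular if it equals $R(\mathbf a)$ for some such tuple $\mathbf a$. *)

From mathcomp Require Import all_boot all_algebra all_fingroup.
Set Implicit Arguments.
Unset Strict Implicit.
Unset Printing Implicit Defensive.

(* Ambient group: V = 'rV['Z_(2^M)]_n (additive group of row vectors),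
   with M = (max_i lam i).+1 >= 1 (so 'Z_(2^M) really is Z/2^M).
   Coordinate i of G is the (unique) cyclic subgroup of order 2^(lam i) of
   'Z_(2^M), namely the multiples of 2^(M - lam i). *)

Definition bigM (n : nat) (lam : 'I_n -> nat) : nat := (\max_(i < n) lam i).+1.

Definition Amb (n : nat) (lam : 'I_n -> nat) : finGroupType :=
  'rV['Z_(2 ^ bigM lam)]_n.

Definition coord (n : nat) (lam : 'I_n -> nat) (g : Amb lam) (i : 'I_n)
  : 'Z_(2 ^ bigM lam) := (g : 'rV_n) ord0 i.

Definition Gset (n : nat) (lam : 'I_n -> nat) : {set Amb lam} :=
  [set g : Amb lam | [forall i, 2 ^ (bigM lam - lam i) %| (coord g i : nat)]].

Lemma Gset_group_set (n : nat) (lam : 'I_n -> nat) : group_set (Gset lam).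
Proof.
apply/group_setP; split.
  by rewrite inE; apply/forallP => i; rewrite /coord mxE dvdn0.
move=> x y; rewrite !inE => /forallP Hx /forallP Hy; apply/forallP => i.
rewrite /coord.
have -> : ((x * y)%g : 'rV_n) = ((x : 'rV_n) + (y : 'rV_n))%R by [].
rewrite mxE /= /Zp_add /=.
set d := 2 ^ _.
have hd : d %| 2 ^ bigM lam by rewrite /d dvdn_exp2l // leq_subr.
have hm : (Zp_trunc (2 ^ bigM lam)).+2 = 2 ^ bigM lam.
  rewrite Zp_cast //.
  by rewrite /bigM expnS; case: (2 ^ _) (expn_gt0 2 (\max_(i < n) lam i)) => // k _; rewrite mul2n -addnn; case: k.
rewrite -hm in hd.
by rewrite /dvdn (modn_dvdm _ hd) -/(dvdn _ _) dvdn_add ?Hx ?Hy.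
Qed.

Canonical Ggroup (n : nat) (lam : 'I_n -> nat) := Group (Gset_group_set lam).

(* R(a) = union over b <= a of T(b), T(b) = { g in G | |g_i| = 2^(b_i) for all i }.
   Orders are taken in 'Z_(2^M), which coincide with the orders in the
   cyclic coordinate subgroup Z_{2^lam_i}. *)
Definition Tset (n : nat) (lam : 'I_n -> nat) (b : 'I_n -> nat) : {set Amb lam} :=
  [set g in Gset lam | [forall i, #[coord g i]%g == 2 ^ (b i)]].

Definition regular (n : nat) (lam : 'I_n -> nat) (H : {set Amb lam}) : Prop :=
  exists a : 'I_n -> nat, (forall i, a i <= lam i) /\
    (forall g, g \in H <-> exists2 b : 'I_n -> nat, (forall i, b i <= a i) & g \in Tset lam b).
Arguments regular {n} lam H.

Definition char_lattice_distributive (gT : finGroupType) (G : {set gT}) : Prop :=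
  forall H K L : {group gT},
    (H \char G)%g -> (K \char G)%g -> (L \char G)%g ->
    (H :&: (K <*> L))%g = ((H :&: K) <*> (H :&: L))%g.

From mathcomp Require Import all_boot all_algebra all_fingroup all_solvable.
From mathcomp Require Import zify.
Set Implicit Arguments.
Unset Strict Implicit.
Unset Printing Implicit Defensive.
Import GRing.Theory.

(* Write level y for the 2-adic logarithm of the order of y and R(b) (here
   [Rset lam b]) for the subgroup of the elements whose i-th coordinate has
   level at most b_i; the regular subgroups are exactly the R(b) with b <= lam.
   As R(a) :&: R(b) = R(min a b) and R(b) <*> R(c) = R(max b c), regular
   subgroups form a distributive lattice.
   Conversely, let H be characteristic and c_i the largest level of an element
   of H supported on coordinate i, so that R(c) <= H. The transvections
   g |-> g + 2^(lam_l - lam_i) g_l e_i are automorphisms, hence every h in H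
   satisfies level h_l <= c_i or level h_l + lam_i <= c_i + lam_l, and this
   makes R(b) characteristic for every b obtained by raising some c_i to
   level h_i. Take h in H \ R(c) with a minimal set of overflowing coordinates.
   A single overflowing coordinate j is impossible, as then h_j e_j lies in H.
   For two of them j != k, distributivity applied to Z = R(c raised to the
   levels of h off j), X = R(c raised to level h_j at j) and H puts h with its
   j-th coordinate erased into (Z :&: X) <*> (Z :&: H) <= R(c), contradicting
   the overflow at k. *)

Section Level.

Variable m : nat.
Local Notation Z := 'Z_(2 ^ m.+1).

Lemma pow2_gt1 : 1 < 2 ^ m.+1.
Proof. by rewrite (ltn_exp2l 0). Qed.

Lemma Zp_cast_pow2 : (Zp_trunc (2 ^ m.+1)).+2 = 2 ^ m.+1.
Proof. exact: Zp_cast pow2_gt1. Qed.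

Definition level (y : Z) : nat := logn 2 #[y]%g.

Lemma order_level y : #[y]%g = 2 ^ level y.
Proof.
have := order_dvdG (in_setT y); rewrite cardsT card_ord Zp_cast_pow2.
by case/dvdn_pfactor => // e _ E; rewrite /level E pfactorK.
Qed.

Lemma level_leE y b : (level y <= b) = (y *+ 2 ^ b == 0)%R.
Proof. by rewrite -(dvdn_Pexp2l _ _ (ltnSn 1)) -order_level order_dvdn. Qed.

Lemma level_le_dvdE y b : b <= m.+1 -> (level y <= b) = (2 ^ (m.+1 - b) %| y).
Proof.
move=> le_bm; rewrite level_leE Zp_mulrn -val_eqE /= [X in _ %% X]Zp_cast_pow2.
by rewrite -/(dvdn _ _) -{1}(subnK le_bm) expnD dvdn_pmul2r ?expn_gt0.
Qed.

Lemma level_le_max y : level y <= m.+1.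
Proof. by rewrite level_le_dvdE // subnn dvd1n. Qed.

Definition gen_level k : Z := (2 ^ (m.+1 - k))%:R%R.

Lemma level_gen k : k <= m.+1 -> level (gen_level k) = k.
Proof.
move=> le_km.
have leE b : b <= m.+1 -> (level (gen_level k) <= b) = (k <= b).
  move=> le_bm; rewrite level_le_dvdE // val_Zp_nat ?pow2_gt1 //.
  case: k le_km => [|k] le_km; first by rewrite subn0 modnn dvdn0 leq0n.
  rewrite modn_small ?ltn_exp2l ?dvdn_Pexp2l //; lia.
apply: anti_leq; rewrite leE // leqnn /=.
by rewrite -leE ?leqnn ?level_le_max.
Qed.

Lemma gen_level0 : gen_level 0 = 0%R.
Proof.
by have := level_leE (gen_level 0) 0; rewrite level_gen // expn0 mulr1n => /esym/eqP.
Qed.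

Lemma gen_level_expn b l : b <= l -> l <= m.+1 ->
  gen_level b = (gen_level l *+ 2 ^ (l - b))%R.
Proof.
by move=> le_bl le_lm; rewrite -mulrnA -expnD; congr (_ %:R)%R; congr (2 ^ _); lia.
Qed.

Lemma level_le_gen y b : b <= m.+1 -> level y <= b -> exists t, y = (gen_level b *+ t)%R.
Proof.
move=> le_bm; rewrite level_le_dvdE // => /dvdnP [t Ey].
by exists t; rewrite -mulrnA mulnC -Ey natr_Zp.
Qed.

Lemma level_le_cycle y z : level z <= level y -> exists t, z = (y *+ t)%R.
Proof.
move=> le_zy; have cycZ : cyclic [set: Z] by rewrite Zp_cycle cycle_cyclic.
have : (<[z]> \subset <[y]>)%g.
  by rewrite -(cardSg_cyclic cycZ) ?subsetT // -!orderE !order_level dvdn_Pexp2l.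
by rewrite cycle_subG => /cycleP [t ->]; exists t.
Qed.

Lemma level0 b : level (0 : Z)%R <= b.
Proof. by rewrite level_leE mul0rn. Qed.

Lemma level_addr y z b : level y <= b -> level z <= b -> level (y + z)%R <= b.
Proof. by rewrite !level_leE mulrnDl => /eqP-> /eqP->; rewrite addr0. Qed.

Lemma level_mulrn y t b : level y <= b -> level (y *+ t)%R <= b.
Proof. by rewrite !level_leE mulrnAC => /eqP->; rewrite mul0rn. Qed.

Lemma level_mulrn_expn y e b : (level (y *+ 2 ^ e)%R <= b) = (level y <= e + b).
Proof. by rewrite !level_leE -mulrnA expnD. Qed.

End Level.

Arguments gen_level {m} k.

Section Coordinates.

Variables (n : nat) (lam : 'I_n -> nat).
Local Notation Z := 'Z_(2 ^ bigM lam).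
Local Notation V := (Amb lam).

Lemma coordP (g h : V) : (forall i, coord g i = coord h i) -> g = h.
Proof. by move=> E; apply/rowP => i; apply: E. Qed.

Lemma coordM (g h : V) i : coord (g * h)%g i = (coord g i + coord h i)%R.
Proof. by rewrite /coord mxE. Qed.

Lemma coord1 i : coord (1%g : V) i = 0%R.
Proof. by rewrite /coord mxE. Qed.

Lemma coordX (g : V) t i : coord (g ^+ t)%g i = (coord g i *+ t)%R.
Proof. by elim: t => [|t IHt]; rewrite ?coord1 // expgS coordM IHt mulrS. Qed.

Lemma coordV (g : V) i : coord g^-1%g i = (- coord g i)%R.
Proof. by apply/eqP; rewrite -subr_eq0 opprK addrC -coordM mulgV coord1. Qed.

Lemma coord_prod (F : 'I_n -> V) j :
  coord (\prod_(i < n) F i)%g j = (\sum_(i < n) coord (F i) j)%R.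
Proof.
by apply: (big_morph (fun g => coord g j)) => [g h|]; [apply: coordM | apply: coord1].
Qed.

Definition single (i : 'I_n) (y : Z) : V := (\row_j (if j == i then y else 0))%R.

Lemma coord_single i y j : coord (single i y) j = if j == i then y else 0%R.
Proof. by rewrite /coord mxE. Qed.

Lemma single0 i : single i 0%R = 1%g.
Proof. by apply: coordP => j; rewrite coord_single coord1; case: eqP. Qed.

Lemma single_mulrn i y t : single i (y *+ t)%R = (single i y ^+ t)%g.
Proof.
by apply: coordP => j; rewrite coordX !coord_single; case: eqP; rewrite ?mul0rn.
Qed.

Lemma coord_prod_single (F : 'I_n -> Z) j : coord (\prod_(i < n) single i (F i))%g j = F j.
Proof.
rewrite coord_prod (bigD1 j) //= coord_single eqxx big1 ?addr0 // => i /negbTE ij.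
by rewrite coord_single eq_sym ij.
Qed.

Lemma prod_single_coord (g : V) : (\prod_(i < n) single i (coord g i))%g = g.
Proof. by apply: coordP => j; rewrite coord_prod_single. Qed.

End Coordinates.

Section RegularSubgroups.

Variables (n : nat) (lam : 'I_n -> nat).
Local Notation V := (Amb lam).

Definition Rset (b : 'I_n -> nat) : {set V} :=
  [set g : V | [forall i, level (coord g i) <= b i]].

Lemma RsetP b g : reflect (forall i, level (coord g i) <= b i) (g \in Rset b).
Proof. by rewrite inE; apply: forallP. Qed.

Lemma Rset_group_set b : group_set (Rset b).
Proof.
apply/group_setP; split; first by apply/RsetP => i; rewrite coord1 level0.
by move=> g h /RsetP gb /RsetP hb; apply/RsetP => i; rewrite coordM level_addr.
Qed.

Canonical Rset_group b := Group (Rset_group_set b).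

Lemma lam_le_bigM i : lam i <= bigM lam.
Proof. by rewrite ltnW // ltnS (leq_bigmax i). Qed.

Lemma Gset_Rset : Gset lam = Rset lam.
Proof.
apply/setP => g; rewrite !inE; apply: eq_forallb => i.
by rewrite level_le_dvdE ?lam_le_bigM.
Qed.

Lemma subset_Rset b b' : (forall i, b i <= b' i) -> Rset b \subset Rset b'.
Proof.
by move=> le_bb'; apply/subsetP => g /RsetP gb; apply/RsetP => i; apply: leq_trans (gb i) _.
Qed.

Lemma mem_single_Rset b i y : level y <= b i -> single i y \in Rset b.
Proof.
by move=> le_yb; apply/RsetP => j; rewrite coord_single; case: eqP => [->|]; rewrite ?level0.
Qed.

Lemma setI_Rset a b : Rset a :&: Rset b = Rset (fun i => minn (a i) (b i)).
Proof.
apply/setP => g; rewrite inE; apply/andP/RsetP => [[/RsetP ga /RsetP gb] i|gab].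
  by rewrite leq_min ga gb.
by split; apply/RsetP => i; have := gab i; rewrite leq_min => /andP[].
Qed.

Lemma joing_Rset b c : (Rset b <*> Rset c)%g = Rset (fun i => maxn (b i) (c i)).
Proof.
apply/eqP; rewrite eqEsubset join_subG !subset_Rset => [|i|i]; last 2 first.
- by rewrite leq_max leqnn orbT.
- by rewrite leq_max leqnn.
apply/subsetP => g /RsetP gbc; rewrite -(prod_single_coord g); apply: group_prod => i _.
apply: mem_gen; rewrite inE; have := gbc i; rewrite leq_max.
by case/orP => le_gi; apply/orP; [left | right]; apply: mem_single_Rset.
Qed.

Lemma Rset_distributive a b c :
  (Rset a :&: (Rset b <*> Rset c))%g = ((Rset a :&: Rset b) <*> (Rset a :&: Rset c))%g.
Proof.
rewrite !joing_Rset !setI_Rset joing_Rset; apply/setP => g.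
by apply/RsetP/RsetP => gP i; [rewrite -minn_maxr | rewrite minn_maxr]; apply: gP.
Qed.

Lemma TsetP b g :
  reflect (g \in Gset lam /\ forall i, level (coord g i) = b i) (g \in Tset lam b).
Proof.
rewrite [g \in Tset _ _]inE; apply: (iffP andP) => -[gG gb]; split=> //.
  by move=> i; move/forallP/(_ i): gb; rewrite order_level eqn_exp2l // => /eqP.
by apply/forallP => i; rewrite order_level gb.
Qed.

Lemma regularP (H : {set V}) :
  regular lam H <-> exists2 a, (forall i, a i <= lam i) & H = Rset a.
Proof.
have TsetE a g : (forall i, a i <= lam i) ->
    (exists2 b, (forall i, b i <= a i) & g \in Tset lam b) <-> g \in Rset a.
  move=> le_a_lam; split => [[b le_ba /TsetP [_ gb]]|ga].
    by apply/RsetP => i; rewrite gb.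
  exists (fun i => level (coord g i)); first exact/RsetP.
  by apply/TsetP; rewrite Gset_Rset (subsetP (subset_Rset le_a_lam)).
split=> [[a [le_a_lam HE]]|[a le_a_lam ->]]; last first.
  by exists a; split=> // g; rewrite TsetE.
by exists a => //; apply/setP => g; apply/idP/idP => [/HE|] /(TsetE a g le_a_lam) => [|/HE].
Qed.

End RegularSubgroups.

Section CharacteristicRsets.

Variables (n : nat) (lam : 'I_n -> nat).
Local Notation V := (Amb lam).
Local Notation G := (Gset lam).

Lemma level_coord_le (g : V) i : g \in G -> level (coord g i) <= lam i.
Proof. by rewrite Gset_Rset => /RsetP. Qed.

Lemma single_mem (i : 'I_n) y : level y <= lam i -> single i y \in G.
Proof. by rewrite Gset_Rset; apply: mem_single_Rset. Qed.

Lemma expg_level (v : V) e : (v ^+ (2 ^ e)%N == 1)%g = [forall i, level (coord v i) <= e].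
Proof.
apply/eqP/forallP => [ve i|ve]; first by rewrite level_leE -coordX ve coord1.
by apply: coordP => i; rewrite coordX coord1; apply/eqP; rewrite -level_leE.
Qed.

Lemma morph_level_le (f : {morphism G >-> V}) v e i :
  v \in G -> (forall j, level (coord v j) <= e) -> level (coord (f v) i) <= e.
Proof.
move=> vG ve; have /eqP fve : (v ^+ (2 ^ e)%N == 1)%g by rewrite expg_level; apply/forallP.
by move: i; apply/forallP; rewrite -expg_level -morphX // fve morph1.
Qed.

Lemma level_morph_single (f : {morphism G >-> V}) l y i b :
  (f @* G \subset G)%g -> level y <= lam l ->
  level y <= b \/ level y + lam i <= b + lam l ->
  level (coord (f (single l y)) i) <= b.
Proof.
move=> fGG le_y_lam hb; pose u : V := single l (gen_level (lam l)).
have uG : u \in G by rewrite single_mem // level_gen ?lam_le_bigM.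
have [t ->] := level_le_gen (leq_trans le_y_lam (lam_le_bigM lam l)) (leqnn (level y)).
rewrite (gen_level_expn le_y_lam (lam_le_bigM lam l)) -mulrnA single_mulrn morphX //.
rewrite coordX mulrnA level_mulrn // level_mulrn_expn -/u.
have le_fu : level (coord (f u) i) <= minn (lam i) (lam l).
  rewrite leq_min; apply/andP; split.
    by apply: level_coord_le; apply: (subsetP fGG); apply: mem_morphim.
  apply: morph_level_le => // j; rewrite coord_single.
  by case: eqP => _; rewrite ?level_gen ?lam_le_bigM ?level0.
by apply: leq_trans le_fu _; case: hb; lia.
Qed.

Lemma Rset_char b : (forall i, b i <= lam i) ->
  (forall i l, b l <= b i \/ b l + lam i <= b i + lam l) -> (Rset lam b \char G)%g.
Proof.
move=> le_b_lam hb; have sRG : Rset lam b \subset G by rewrite Gset_Rset subset_Rset.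
apply/(charP (Rset_group lam b) (Ggroup lam)); split=> // f injf fG.
have sfR : (f @* Rset lam b \subset Rset lam b)%g.
  apply/subsetP => _ /morphimP [x xG /RsetP xb ->]; apply/RsetP => i.
  rewrite -(prod_single_coord x) morph_prod => [|l _]; last first.
    by apply: single_mem; apply: level_coord_le.
  rewrite coord_prod; apply: (big_ind (fun z => level z <= b i)) => [|y z|l _].
  - exact: level0.
  - exact: level_addr.
  - apply: level_morph_single; [by rewrite fG | exact: level_coord_le |].
    by case: (hb i l) => ?; [left | right]; have := xb l; lia.
by apply/eqP; rewrite eqEcard sfR (card_injm injf sRG) leqnn.
Qed.

Section Transvection.

Variables l i : 'I_n.
Hypothesis l_neq_i : l != i.

Definition transvection (v : V) : V :=
  (v * single i (coord v l *+ 2 ^ (lam l - lam i))%R)%g.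

Lemma coord_transvection_l v : coord (transvection v) l = coord v l.
Proof. by rewrite coordM coord_single (negbTE l_neq_i) addr0. Qed.

Lemma transvection_morphM : {in G &, {morph transvection : x y / x * y}}%g.
Proof.
move=> v w _ _; apply: coordP => j; rewrite !(coordM, coord_single).
by case: eqP => _; [rewrite mulrnDl addrACA | rewrite !addr0].
Qed.

Definition transvection_morphism := Morphism transvection_morphM.

Lemma injm_transvection : ('injm transvection_morphism)%g.
Proof.
apply/injmP => v w _ _ /= Evw; have El := coord_transvection_l v.
rewrite Evw coord_transvection_l in El; apply: coordP => j.
by have := congr1 (fun x => coord x j) Evw; rewrite !coordM !coord_single El => /addIr.
Qed.

Lemma morphim_transvection : (transvection_morphism @* G)%g = G.
Proof.
apply/eqP; rewrite eqEcard (card_injm injm_transvection (subxx _)) leqnn andbT.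
apply/subsetP => _ /morphimP [v vG _ ->]; rewrite groupM // single_mem //.
by rewrite level_mulrn_expn; have := level_coord_le l vG; lia.
Qed.

Lemma char_single_transvection (H : {group V}) g : (H \char G)%g -> g \in H ->
  single i (coord g l *+ 2 ^ (lam l - lam i))%R \in H.
Proof.
case/charP => sHG /(_ _ injm_transvection morphim_transvection) fH gH.
have := mem_morphim transvection_morphism (subsetP sHG g gH) gH.
by rewrite fH /= groupMl.
Qed.

End Transvection.

Definition max_level (H : {set V}) (i : 'I_n) : nat :=
  \max_(k < (lam i).+1 | single i (gen_level k) \in H) k.

Lemma max_level_le H i : max_level H i <= lam i.
Proof. by apply/bigmax_leqP => k _; rewrite -ltnS. Qed.

Lemma max_level_le_bigM H i : max_level H i <= bigM lam.
Proof. exact: leq_trans (max_level_le H i) (lam_le_bigM lam i). Qed.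

Lemma single_gen_max_level (H : {group V}) i : single i (gen_level (max_level H i)) \in H.
Proof.
have : 0 < #|(fun k : 'I_(lam i).+1 => single i (gen_level k) \in H)|.
  by apply/card_gt0P; exists ord0; rewrite -topredE /= gen_level0 single0 group1.
by case/(eq_bigmax_cond (fun k => nat_of_ord k)) => k Hk Ek; rewrite /max_level Ek.
Qed.

Lemma mem_single_max_level (H : {group V}) i y : level y <= max_level H i -> single i y \in H.
Proof.
move=> le_yc; have [t ->] := level_le_gen (max_level_le_bigM H i) le_yc.
by rewrite single_mulrn groupX ?single_gen_max_level.
Qed.

Lemma level_le_max_level (H : {group V}) i y :
  single i y \in H -> level y <= lam i -> level y <= max_level H i.
Proof.
move=> yH le_y_lam; rewrite -ltnS in le_y_lam.
have [t Et] := level_le_cycle (eq_leq (level_gen (level_le_max y))).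
apply: (@leq_bigmax_cond _ _ (fun k => nat_of_ord k) (Ordinal le_y_lam)).
by rewrite /= Et single_mulrn groupX.
Qed.

Lemma Rset_max_level_sub (H : {group V}) : Rset lam (max_level H) \subset H.
Proof.
apply/subsetP => g /RsetP gc; rewrite -(prod_single_coord g).
by apply: group_prod => i _; apply: mem_single_max_level.
Qed.

Lemma max_level_transvection (H : {group V}) g i l :
  (H \char G)%g -> g \in H -> i != l ->
  level (coord g l) <= max_level H i \/ level (coord g l) + lam i <= max_level H i + lam l.
Proof.
move=> chH gH il; have le_gl := level_coord_le l (subsetP (char_sub chH) g gH).
have li : l != i by rewrite eq_sym.
have := char_single_transvection li chH gH.
move/level_le_max_level; rewrite !level_mulrn_expn => /(_ ltac:(lia)); lia.
Qed.

End CharacteristicRsets.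

Section Regularity.

Variables (n : nat) (lam : 'I_n -> nat) (H : {group Amb lam}).
Hypothesis chH : (H \char Gset lam)%g.
Local Notation V := (Amb lam).
Local Notation G := (Gset lam).
Local Notation c := (max_level H).

Lemma Rset_char_between (h : V) b : h \in H ->
  (forall i, b i = c i \/ b i = level (coord h i)) ->
  (forall i, c i <= b i <= lam i) -> (Rset lam b \char G)%g.
Proof.
move=> hH bE bc; apply: Rset_char => [i|i l]; first by case/andP: (bc i).
have [-> | il] := eqVneq i l; first by left.
have := bc i; case: (bE l) => ->; last by have := max_level_transvection chH hH il; lia.
have := max_level_transvection chH (single_gen_max_level H l) il.
by rewrite coord_single eqxx level_gen ?max_level_le_bigM; lia.
Qed.

Definition overflow (h : V) : {set 'I_n} := [set i | c i < level (coord h i)].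

Lemma overflowP h i : (i \in overflow h) = ~~ (level (coord h i) <= c i).
Proof. by rewrite inE ltnNge. Qed.

Lemma Rset_max_levelE h : (h \in Rset lam c) = (overflow h == set0).
Proof.
apply/RsetP/eqP => [hc | /setP h0 i]; first by apply/setP => i; rewrite overflowP hc inE.
by apply/negbNE; rewrite -overflowP h0 inE.
Qed.

Definition erase_coord (j : 'I_n) (h : V) : V := (h * (single j (coord h j))^-1)%g.

Lemma coord_erase j h i : coord (erase_coord j h) i = if i == j then 0%R else coord h i.
Proof.
by rewrite coordM coordV coord_single; case: eqP => [->|]; rewrite ?subrr ?oppr0 ?addr0.
Qed.

Lemma overflow_sub1 h j : h \in H -> overflow h \subset [set j] -> h \in Rset lam c.
Proof.
move=> hH sub1; have le_erase i : i != j -> level (coord h i) <= c i.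
  move=> ij; apply/negbNE; rewrite -overflowP.
  by apply: contra ij => /(subsetP sub1); rewrite inE.
have eR : erase_coord j h \in Rset lam c.
  apply/RsetP => i; rewrite coord_erase.
  by case: eqP => [_|/eqP]; [apply: level0 | apply: le_erase].
have yH : single j (coord h j) \in H.
  have -> : single j (coord h j) = ((erase_coord j h)^-1 * h)%g.
    by rewrite /erase_coord invMg invgK mulgKV.
  by rewrite groupM ?groupV // (subsetP (Rset_max_level_sub H)).
apply/RsetP => i; have [-> | ij] := eqVneq i j; last exact: le_erase.
by apply: level_le_max_level yH _; apply: level_coord_le (subsetP (char_sub chH) _ hH).
Qed.

Hypothesis dist : char_lattice_distributive G.

Lemma overflow_two_absurd h j k :
  h \in H -> j \in overflow h -> k \in overflow h -> k != j ->
  ~ (forall x, x \in H -> overflow x \subset overflow h :\ j -> x \in Rset lam c).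
Proof.
move=> hH jh kh kj minh; have hG := subsetP (char_sub chH) h hH.
have c_le_h i : i \in overflow h -> c i <= level (coord h i).
  by rewrite overflowP -ltnNge => /ltnW.
pose bx i := if i == j then level (coord h j) else c i.
pose bz i := if (i \in overflow h) && (i != j) then level (coord h i) else c i.
have chX : (Rset lam bx \char G)%g.
  apply: (Rset_char_between hH) => i; rewrite /bx; case: eqP => [->|_]; auto.
  - by rewrite c_le_h // level_coord_le.
  - by rewrite leqnn max_level_le.
have chZ : (Rset lam bz \char G)%g.
  apply: (Rset_char_between hH) => i; rewrite /bz; case: ifP => [/andP [ih _]|_]; auto.
  - by rewrite c_le_h // level_coord_le.
  - by rewrite leqnn max_level_le.
have wZ : erase_coord j h \in Rset lam bz.
  apply/RsetP => i; rewrite coord_erase /bz; case: eqP => [_|/eqP ij]; first exact: level0.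
  by rewrite /= andbT; case: ifP => // /negbT; rewrite overflowP negbK.
have wXH : erase_coord j h \in (Rset lam bx <*> H)%g.
  apply: groupM; first exact: (subsetP (joing_subr _ _)).
  rewrite groupV; apply: (subsetP (joing_subl _ _)).
  by apply: mem_single_Rset; rewrite /bx eqxx.
have sZX : Rset lam bz :&: Rset lam bx \subset Rset lam c.
  rewrite setI_Rset subset_Rset // => i; rewrite /bx /bz.
  by case: eqP => _; rewrite /= ?andbF ?geq_minl ?geq_minr.
have sZH : Rset lam bz :&: H \subset Rset lam c.
  apply/subsetP => x /setIP [/RsetP xz xH]; apply: minh => //; apply/subsetP => i.
  rewrite overflowP in_setD1 => xi; have := xz i; rewrite /bz.
  by case: ifP => [/andP [-> ->] //|_ le_xc]; rewrite le_xc in xi.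
have wR : erase_coord j h \in Rset lam c.
  have sJ : ((Rset lam bz :&: Rset lam bx) <*> (Rset lam bz :&: H) \subset Rset lam c)%g.
    by rewrite join_subG sZX sZH.
  by rewrite (subsetP sJ) // -(dist chZ chX chH) inE wZ.
move/RsetP/(_ k): wR; rewrite coord_erase (negbTE kj).
by apply/negP; rewrite -overflowP.
Qed.

Lemma char_eq_Rset_max_level : H :=: Rset lam c.
Proof.
apply/eqP; rewrite eqEsubset Rset_max_level_sub andbT; apply/subsetP => h.
elim: #|overflow h|.+1 {-2}h (ltnSn #|overflow h|) => // N IHN {}h lt_hN hH.
have [h0 | [j jh]] := set_0Vmem (overflow h); first by rewrite Rset_max_levelE h0.
case: (boolP [exists k in overflow h, k != j]).
  case/exists_inP => k kh kj; exfalso.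
  apply: (overflow_two_absurd hH jh kh kj) => x xH sub; apply: IHN xH.
  by have := subset_leq_card sub; rewrite (cardsD1 j) jh in lt_hN; lia.
move/exists_inPn => one.
apply: (overflow_sub1 hH (j := j)); apply/subsetP => i ih.
by rewrite inE; apply/negPn: (one i ih).
Qed.

End Regularity.

Theorem mainTheorem11 (n : nat) (lam : 'I_n -> nat)
  (lam_sorted : forall i j : 'I_n, (i <= j)%N -> (lam i <= lam j)%N) :
  char_lattice_distributive (Gset lam) <->
  (forall H : {group Amb lam}, (H \char Gset lam)%g -> regular lam H).
Proof.
split=> [dist H chH | reg H K L chH chK chL].
  by apply/regularP; exists (max_level H); [apply: max_level_le | apply: char_eq_Rset_max_level].
case/regularP: (reg H chH) => a _ ->; case/regularP: (reg K chK) => b _ ->.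
by case/regularP: (reg L chL) => c _ ->; apply: Rset_distributive.
Qed.
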